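(* Let $\mu\in\mathcal{M}'$. Then there exists an $S$-valued process $(\mathbf{t}_n)_{n\ge1}$, possibly defined on an enlargement of the probability space carrying $(\mathbf{s}_n)_{n\ge1}$, such that: (P1) the law of the sequence $(\mathbf{t}_n)_n$ equals the law of the sequence $(\mathbf{s}_n)_n$; (P2) for each $n$, the law of the pair $(\mathbf{s}_n,\mathbf{t}_n)$ is $\mu$; (P3) for each $n$, the conditional law of $\mathbf{s}_n$ given $(\mathbf{t}_1,\dots,\mathbf{t}_n)$ is $\mu(\cdot\mid\mathbf{t}_n)$; (P4) for each $n$, conditional on $\mathbf{s}_n$, the vector $(\mathbf{t}_1,\dots,\mathbf{t}_n)$ is independent of $(\mathbf{s}_{n+1},\mathbf{s}_{n+2},\dots)$.
   Context: $S$ is a finite set and $T$ a copy of $S$. $(\mathbf{s}_n)_{n\ge1}$ is an irreducible aperiodic Markov chain on $S$ with transition function $p(\cdot\mid\cdot)$, invariant measure $m$ (full support), and $\mathbf{s}_1\sim m$. $\mathcal{M}$ is the set of probability distributions $\mu$ on $S\times T$ both of whose marginals equal $m$; $\mu(s\mid t)=\mu(s,t)/m(t)$. $\mathcal{M}'$ is the set of $\mu\in\mathcal{M}$ such that for every $(s,t)\in S\times T$, $\sum_{s'\in S}\mu(s'\mid t)p(s\mid s')=\sum_{t'\in T}\mu(s\mid t')p(t'\mid t)$. *)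

From HB Require Import structures.
From mathcomp Require Import all_boot all_order all_algebra.
From mathcomp Require Import all_classical all_reals all_analysis.
Set Implicit Arguments. Unset Strict Implicit. Unset Printing Implicit Defensive.
Import Order.TTheory GRing.Theory Num.Theory.
Local Open Scope classical_set_scope.
Local Open Scope ring_scope.

Section Defs.
Variables (R : realType) (S : finType).

Definition stochastic (p : S -> S -> R) : Prop :=
  (forall x y, 0 <= p x y) /\ (forall x, \sum_(y : S) p x y = 1).

Fixpoint pstep (p : S -> S -> R) (n : nat) (x y : S) : R :=
  match n with
  | 0 => (x == y)%:R
  | n'.+1 => \sum_(z : S) pstep p n' x z * p z y
  end.

Definition irreducible (p : S -> S -> R) : Prop :=
  forall x y, exists n, 0 < pstep p n x y.

Definition aperiodic (p : S -> S -> R) : Prop :=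
  forall x, forall d : nat,
    (forall n, (0 < n)%N -> 0 < pstep p n x x -> (d %| n)%N) -> d = 1%N.

Definition prob_vector (m : S -> R) : Prop :=
  (forall x, 0 <= m x) /\ \sum_(x : S) m x = 1.

Definition invariant_law (p : S -> S -> R) (m : S -> R) : Prop :=
  forall y, \sum_(x : S) m x * p x y = m y.

Definition full_support (m : S -> R) : Prop := forall x, 0 < m x.

(* mu a b = mu(s = a, t = b), a probability on S x T, T a copy of S. *)
Definition inM (m : S -> R) (mu : S -> S -> R) : Prop :=
  (forall a b, 0 <= mu a b) /\ \sum_(a : S) \sum_(b : S) mu a b = 1 /\
  (forall a, \sum_(b : S) mu a b = m a) /\ (forall b, \sum_(a : S) mu a b = m b).

Definition mu_cond (m : S -> R) (mu : S -> S -> R) (s t : S) : R := mu s t / m t.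

Definition inM' (p : S -> S -> R) (m : S -> R) (mu : S -> S -> R) : Prop :=
  inM m mu /\
  forall s t, \sum_(s' : S) mu_cond m mu s' t * p s' s
            = \sum_(t' : S) mu_cond m mu s t' * p t t'.

End Defs.

Section Proc.
Variables (d : measure_display) (Omega : measurableType d) (S : finType).

Definition cyl (X : nat -> Omega -> S) (k n : nat) (x : nat -> S) : set Omega :=
  [set w | forall i, (k <= i < k + n)%N -> X i w = x i].

Definition evt (X : nat -> Omega -> S) (n : nat) (a : S) : set Omega :=
  [set w | X n w = a].

Definition rv_process (X : nat -> Omega -> S) : Prop :=
  forall n a, measurable (evt X n a).
End Proc.

Local Open Scope ereal_scope.

(* X is a Markov chain with initial law m and transition p (indices start at 0,
   so X 0 is s_1 of the paper). *)
Definition markov_chain (R : realType) (d : measure_display) (Omega : measurableType d)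
  (P : probability Omega R) (S : finType) (m : S -> R) (p : S -> S -> R)
  (X : nat -> Omega -> S) : Prop :=
  forall n x, P (cyl X 0 n.+1 x) = (m (x 0%N) * \prod_(i < n) p (x i) (x i.+1))%:E.

From HB Require Import structures.
From mathcomp Require Import all_boot all_order all_algebra.
From mathcomp Require Import all_classical all_reals all_analysis.
From mathcomp Require Import ring.
Set Implicit Arguments. Unset Strict Implicit. Unset Printing Implicit Defensive.
Import Order.TTheory GRing.Theory Num.Theory.
Local Open Scope classical_set_scope.
Local Open Scope ring_scope.

(* The process [t] lives on [Omega0 * R], the extra coordinate [u] being uniform on
   [0, 1] and independent of [s].  Given the path of [s], [t_1] has law
   [mu (s_1, .) / m (s_1)] and [t_(n+1)] has law proportional to
   [p (t_n, b) mu (s_(n+1) | b)]; all these successive choices are read off the single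
   number [u] through nested subdivisions of [0, 1).  Condition M' is exactly what makes
   the posterior of [s_n] given [t_1, ..., t_n] equal to [mu (. | t_n)], by induction on
   [n]; summing out [s_n] gives (P1), and summing out [t_1, ..., t_(n-1)] together with
   the invariance of [m] gives (P2).  (P4) holds because [t_1, ..., t_n] is a function of
   [u] and [s_1, ..., s_n] while [s] is Markov. *)

Definition agree_upto (T : Type) (k : nat) (x y : nat -> T) : Prop :=
  forall i, (i < k)%N -> x i = y i.

Lemma agree_uptoW (T : Type) k (x y : nat -> T) :
  agree_upto k.+1 x y -> agree_upto k x y.
Proof. by move=> h i ik; apply: h; exact: ltnW. Qed.

Section PrefixSum.
Variables (R : realType) (S : finType) (def : S).

Definition upd (x : nat -> S) (k : nat) (a : S) : nat -> S :=
  fun i => if i == k then a else x i.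

Lemma upd_eq x k a : upd x k a k = a.
Proof. by rewrite /upd eqxx. Qed.

Lemma upd_neq x k a i : i != k -> upd x k a i = x i.
Proof. by rewrite /upd => /negbTE ->. Qed.

Lemma upd_id x k : upd x k (x k) = x.
Proof. by apply: funext => i; rewrite /upd; case: eqP => // ->. Qed.

(* [sum_prefix N F] sums [F x] over all [x] that equal [def] from index [N] on. *)
Fixpoint sum_prefix (N : nat) (F : (nat -> S) -> R) : R :=
  match N with
  | 0 => F (fun _ => def)
  | N'.+1 => sum_prefix N' (fun x => \sum_(a : S) F (upd x N' a))
  end.

Lemma sum_prefixS N F :
  sum_prefix N.+1 F = sum_prefix N (fun x => \sum_(a : S) F (upd x N a)).
Proof. by []. Qed.

Lemma eq_sum_prefix N F G : (forall x, F x = G x) -> sum_prefix N F = sum_prefix N G.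
Proof. by move=> /funext ->. Qed.

Lemma sum_prefix_sum N (I : finType) (F : I -> (nat -> S) -> R) :
  sum_prefix N (fun x => \sum_(i : I) F i x) = \sum_(i : I) sum_prefix N (F i).
Proof.
elim: N F => [//|N IH] F /=.
by rewrite -IH; apply: eq_sum_prefix => x; exact: exchange_big.
Qed.

Lemma mulr_sum_prefixr N c F : sum_prefix N (fun x => c * F x) = c * sum_prefix N F.
Proof.
elim: N c F => [//|N IH] c F /=.
by rewrite -IH; apply: eq_sum_prefix => x; rewrite mulr_sumr.
Qed.

Section PrefixPartition.
Variables (d : measure_display) (T : measurableType d) (P : probability T R).

Lemma fine_measure_bigcup_fin (I : finType) (F : I -> set T) :
  (forall i, measurable (F i)) -> (forall i j, i != j -> F i `&` F j = set0) ->
  measurable (\bigcup_i F i) /\ fine (P (\bigcup_i F i)) = \sum_(i : I) fine (P (F i)).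
Proof.
move=> mF dF; have mU : measurable (\bigcup_i F i).
  by apply: fin_bigcup_measurable => [|i _]; [exact: finite_finset|exact: mF].
have triv : trivIset setT F.
  move=> i j _ _ [w Fw]; case: (eqVneq i j) => // /dF ij.
  by have := Fw; rewrite ij.
split=> //; rewrite (measure_fin_bigcup _ finite_finset triv) => [|i _]; last exact: mF.
rewrite (fsbigE (enum I)) ?enum_uniq // => [|i _]; last by rewrite mem_enum.
under eq_bigl do rewrite in_setT.
by rewrite big_enum -sum_fine // => i _; exact: fin_num_measure.
Qed.

Lemma fine_measure_bigcup_prefix k (F : (nat -> S) -> set T) :
  (forall x y, agree_upto k x y -> F x = F y) ->
  (forall x y i, (i < k)%N -> x i != y i -> F x `&` F y = set0) ->
  (forall x, measurable (F x)) ->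
  measurable (\bigcup_x F x) /\
  fine (P (\bigcup_x F x)) = sum_prefix k (fun x => fine (P (F x))).
Proof.
elim: k F => [|k IH] F Fdep Fdis Fm.
  have -> : \bigcup_x F x = F (fun _ => def).
    apply/seteqP; split=> w /=; last by exists (fun _ => def).
    by move=> [x _]; rewrite (Fdep x (fun _ => def)).
  by split.
pose G x := \bigcup_a F (upd x k a).
have EG : \bigcup_x G x = \bigcup_x F x.
  apply/seteqP; split=> w /=; first by move=> [x _ [a _ h]]; exists (upd x k a).
  by move=> [x _ h]; exists x => //; exists (x k); rewrite ?upd_id.
have Gx x : measurable (G x) /\
    fine (P (G x)) = \sum_(a : S) fine (P (F (upd x k a))).
  apply: fine_measure_bigcup_fin => // a b ab; apply: (Fdis _ _ k) => //.
  by rewrite !upd_eq.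
have [] := IH G.
- move=> x y h.
  have e a : F (upd x k a) = F (upd y k a).
    apply: Fdep => i; rewrite ltnS leq_eqVlt /upd => /orP[/eqP->|ik].
      by rewrite eqxx.
    by rewrite (ltn_eqF ik) h.
  by rewrite /G; under eq_bigcupr do rewrite e.
- move=> x y i ik xy; apply/seteqP; split=> w // [[a _ Fa] [b _ Fb]].
  have : F (upd x k a) `&` F (upd y k b) = set0.
    by apply: (Fdis _ _ i); [exact: ltnW | rewrite /upd (ltn_eqF ik)].
  by move=> E; rewrite -E; split.
- by move=> x; case: (Gx x).
rewrite EG => mU ->; split => //; apply: eq_sum_prefix => x; by case: (Gx x).
Qed.

End PrefixPartition.
End PrefixSum.

Section Cylinders.
Variables (d : measure_display) (T : measurableType d) (S : finType).
Implicit Types (X : nat -> T -> S) (x : nat -> S).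

Lemma cyl0 X k x : cyl X k 0 x = setT.
Proof.
apply/seteqP; split=> w // _ i; rewrite addn0 => /andP[h1 h2].
by have := leq_trans h2 h1; rewrite ltnn.
Qed.

Lemma cylS X k n x : cyl X k n.+1 x = cyl X k n x `&` evt X (k + n) (x (k + n)).
Proof.
apply/seteqP; split=> w /=.
  move=> h; split; last by apply: h; rewrite leq_addr addnS ltnS leqnn.
  by move=> i /andP[h1 h2]; apply: h; rewrite h1 addnS ltnW // ltnS.
move=> [h1 h2] i /andP[hi]; rewrite addnS ltnS leq_eqVlt => /orP[/eqP->//|iN].
by apply: h1; rewrite hi iN.
Qed.

Lemma measurable_cyl X k n x : rv_process X -> measurable (cyl X k n x).
Proof.
move=> hX; elim: n => [|n IH]; first by rewrite cyl0.
by rewrite cylS; apply: measurableI.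
Qed.

Lemma cyl_agree X n x x' : agree_upto n x x' -> cyl X 0 n x = cyl X 0 n x'.
Proof.
move=> h; apply/seteqP; split=> w /= H i /[dup] iN /andP[_]; rewrite add0n => ilt.
  by rewrite -h // H.
by rewrite h // H.
Qed.

End Cylinders.

Lemma measure_fineK (R : realType) d (T : measurableType d) (P : probability T R) A :
  measurable A -> P A = (fine (P A))%:E.
Proof. by move=> mA; rewrite fineK // fin_num_measure. Qed.

Lemma exists_crossing_step (R : realType) (H : nat -> R) (N : nat) (u : R) :
  H 0%N <= u -> u < H N -> exists2 i, (i < N)%N & H i <= u < H i.+1.
Proof.
elim: N => [|N IH] h0 hN; first by have := le_lt_trans h0 hN; rewrite ltxx.
case: (ltP u (H N)) => hu; last by exists N => //; rewrite hu hN.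
by have [i iN hi] := IH h0 hu; exists i => //; exact: ltnW.
Qed.

Section NestedIntervals.
Variables (R : realType) (S : finType) (def : S).
Variable r : nat -> (nat -> S) -> S -> S -> R.
Hypothesis r_ge0 : forall n x prev b, 0 <= r n x prev b.
Hypothesis r_sum1 : forall n x prev, \sum_(b : S) r n x prev b = 1.

Definition partial_weight n x prev k :=
  \sum_(0 <= i < k) r n x prev (nth def (enum S) i).

Definition weight_before n x prev (b : S) := partial_weight n x prev (enum_rank b).

Lemma partial_weight_ge0 n x prev k : 0 <= partial_weight n x prev k.
Proof. by apply: sumr_ge0 => i _. Qed.

Lemma partial_weight_le n x prev k k' :
  (k <= k')%N -> partial_weight n x prev k <= partial_weight n x prev k'.
Proof.
move=> kk; rewrite /partial_weight (@big_cat_nat _ _ _ k 0 k') //= lerDl.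
by apply: sumr_ge0 => i _.
Qed.

Lemma partial_weightS n x prev k :
  partial_weight n x prev k.+1 =
  partial_weight n x prev k + r n x prev (nth def (enum S) k).
Proof. by rewrite /partial_weight big_nat_recr. Qed.

Lemma partial_weight_card n x prev : partial_weight n x prev #|S| = 1.
Proof.
by rewrite -(r_sum1 n x prev) /partial_weight -big_enum /= (big_nth def) cardE.
Qed.

Lemma weight_before_next n x prev b :
  weight_before n x prev b + r n x prev b = partial_weight n x prev (enum_rank b).+1.
Proof. by rewrite /weight_before partial_weightS nth_enum_rank. Qed.

Lemma weight_through_le1 n x prev b : weight_before n x prev b + r n x prev b <= 1.
Proof.
by rewrite weight_before_next -(partial_weight_card n x prev) partial_weight_le.
Qed.

(* An interval is a triple (last choice, left end, length).  The interval of
   choice [b] at step [n] is the [b]-th piece of the subdivision of the current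
   interval in proportions [r n x prev]. *)
Definition subint n x b (I : S * R * R) : S * R * R :=
  let: (prev, lo, len) := I in
  (b, lo + len * weight_before n x prev b, len * r n x prev b).

Definition in_int (I : S * R * R) (u : R) : bool :=
  let: (_, lo, len) := I in (lo <= u) && (u < lo + len).

Definition in_subint n x u I b : bool := in_int (subint n x b I) u.

Definition next_int n x u I := subint n x (odflt def [pick b | in_subint n x u I b]) I.

Fixpoint int_of_point n x u : S * R * R :=
  match n with 0 => (def, 0, 1) | n'.+1 => next_int n' x u (int_of_point n' x u) end.

Fixpoint int_of_path n x (y : nat -> S) : S * R * R :=
  match n with 0 => (def, 0, 1) | n'.+1 => subint n' x (y n') (int_of_path n' x y) end.

Lemma pick_in_subint n x u prev lo len b :
  0 <= len -> in_subint n x u (prev, lo, len) b ->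
  odflt def [pick b | in_subint n x u (prev, lo, len) b] = b.
Proof.
move=> len0 hb; case: pickP => [b0 hb0|/(_ b)]; last by rewrite hb.
have disj c c' : (enum_rank c < enum_rank c')%N ->
    in_subint n x u (prev, lo, len) c -> ~~ in_subint n x u (prev, lo, len) c'.
  move=> lt /andP[_ h1]; apply/negP => /andP[h2 _].
  have : lo + len * weight_before n x prev c + len * r n x prev c <=
         lo + len * weight_before n x prev c'.
    rewrite -addrA -mulrDr lerD2l ler_wpM2l // weight_before_next.
    exact: partial_weight_le.
  by move=> /le_trans/(_ h2)/(lt_le_trans h1); rewrite ltxx.
case: (ltngtP (enum_rank b0) (enum_rank b)) => [lt|lt|/val_inj/enum_rank_inj //].
- by have := disj _ _ lt hb0; rewrite hb.
- by have := disj _ _ lt hb; rewrite hb0.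
Qed.

Lemma exists_in_subint n x u prev lo len :
  0 <= len -> in_int (prev, lo, len) u -> exists b, in_subint n x u (prev, lo, len) b.
Proof.
move=> len0 /andP[h1 h2].
pose H k := lo + len * partial_weight n x prev k.
have [i iN /andP[hi1 hi2]] : exists2 i, (i < #|S|)%N & H i <= u < H i.+1.
  apply: exists_crossing_step.
    by rewrite /H /partial_weight big_geq // mulr0 addr0.
  by rewrite /H partial_weight_card mulr1.
pose b := enum_val (Ordinal iN).
have rb : enum_rank b = i :> nat by rewrite /b enum_valK.
have nb : nth def (enum S) i = b by rewrite /b (enum_val_nth def).
exists b; rewrite /in_subint /= /weight_before rb hi1 /=.
by move: hi2; rewrite /H partial_weightS nb mulrDr addrA.
Qed.

Lemma int_of_path_bounds n x y :
  let: (_, lo, len) := int_of_path n x y in 0 <= lo /\ 0 <= len /\ lo + len <= 1.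
Proof.
elim: n => [|n]; first by rewrite /= add0r lexx ler01.
rewrite /=; case: (int_of_path n x y) => [[prev lo] len] [lo0 [len0 l1]] /=.
split; first by rewrite addr_ge0 // mulr_ge0 // partial_weight_ge0.
split; first by rewrite mulr_ge0.
apply: le_trans l1; rewrite -addrA lerD2l -mulrDr ler_piMr //.
exact: weight_through_le1.
Qed.

Lemma in_subint_in_int n x u prev lo len b :
  0 <= len -> in_subint n x u (prev, lo, len) b -> in_int (prev, lo, len) u.
Proof.
move=> len0 /andP[h1 h2]; apply/andP; split.
  by apply: le_trans h1; rewrite lerDl mulr_ge0 // partial_weight_ge0.
apply: (lt_le_trans h2); rewrite -addrA lerD2l -mulrDr ler_piMr //.
exact: weight_through_le1.
Qed.

Lemma int_of_path_spec x u y n : 0 <= u < 1 ->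
  ((forall i, (i < n)%N -> (int_of_point i.+1 x u).1.1 = y i) <->
     in_int (int_of_path n x y) u) /\
  (in_int (int_of_path n x y) u -> int_of_point n x u = int_of_path n x y).
Proof.
move=> u01; elim: n => [|n [IH1 IH2]].
  by split=> //; split=> // _; rewrite /= add0r.
have := int_of_path_bounds n x y; rewrite [int_of_path n.+1 x y]/=.
case: (int_of_path n x y) IH1 IH2 => [[prev lo] len] IH1 IH2 [_ [len0 _]].
rewrite -/(in_subint n x u (prev, lo, len) (y n)).
have next_eq : in_subint n x u (prev, lo, len) (y n) ->
    int_of_point n.+1 x u = subint n x (y n) (prev, lo, len).
  move=> hc; have hI := in_subint_in_int len0 hc.
  by rewrite /= (IH2 hI) /next_int (pick_in_subint len0 hc).
split=> //; split=> [h | hc i]; last first.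
  rewrite ltnS leq_eqVlt => /orP[/eqP->|ilt]; first by rewrite next_eq.
  exact: (proj2 IH1 (in_subint_in_int len0 hc)).
have hI : in_int (prev, lo, len) u by apply/IH1 => i ilt; apply: h; exact: ltnW.
have [b hb] := exists_in_subint n x len0 hI.
have := h n (ltnSn n); rewrite /= (IH2 hI) /next_int (pick_in_subint len0 hb).
by move=> /= <-.
Qed.

(* Outside [0, 1), a null set for the uniform law, every choice is read as [def]. *)
Definition read_choice n x u :=
  if (0 <= u) && (u < 1) then (int_of_point n.+1 x u).1.1 else def.

Definition read_preim n x y :=
  [set u : R | forall i, (i < n)%N -> read_choice i x u = y i].

Definition int_lo n x y := (int_of_path n x y).1.2.
Definition int_len n x y := (int_of_path n x y).2.

Let out01 := [set u : R | ~ (0 <= u < 1)].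

Lemma read_preimE n x y : read_preim n x y =
  [set` `[int_lo n x y, int_lo n x y + int_len n x y[%R] `|`
  (out01 `&` [set _ | forall i, (i < n)%N -> def = y i]).
Proof.
have := int_of_path_bounds n x y; have spec u := @int_of_path_spec x u y n.
rewrite /int_lo /int_len; move: spec.
case: (int_of_path n x y) => [[prev lo] len] /= spec [lo0 [len0 l1]].
apply/seteqP; split=> u /=.
  move=> h; case: (boolP (0 <= u < 1)) => u01.
    left; rewrite in_itv /=; apply/(proj1 (spec u u01)) => i ilt.
    by have := h i ilt; rewrite /read_choice u01.
  by right; split=> [/(negP u01)|i ilt] //; rewrite -(h i ilt) /read_choice (negbTE u01).
case=> [|[u01 h] i ilt]; last first.
  by rewrite /read_choice; case: ifP => hu; [case: u01; rewrite hu | exact: h].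
rewrite in_itv /= => /andP[h1 h2].
have u01 : 0 <= u < 1 by rewrite (le_trans lo0 h1) (lt_le_trans h2 l1).
move=> i ilt; rewrite /read_choice u01.
exact: (proj2 (proj1 (spec u u01)) (introT andP (conj h1 h2))).
Qed.

Lemma measurable_prop_set (P : Prop) : measurable [set _ : R | P].
Proof.
case: (pselect P) => hP.
  by have -> : [set _ : R | P] = setT by apply/seteqP; split.
by have -> : [set _ : R | P] = set0 by apply/seteqP; split.
Qed.

Lemma measurable_out01 : measurable out01.
Proof.
have -> : out01 = ~` [set` `[(0:R), 1[%R] by apply/seteqP; split=> u /=; rewrite in_itv.
by apply: measurableC; exact: measurable_itv.
Qed.

Lemma measurable_read_preim n x y : measurable (read_preim n x y).
Proof.
rewrite read_preimE; apply: measurableU; first exact: measurable_itv.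
by apply: measurableI; [exact: measurable_out01 | exact: measurable_prop_set].
Qed.

Definition unif := uniform_prob (@ltr01 R).

Lemma unifE (A : set R) : measurable A -> unif A = lebesgue_measure (A `&` `[0%R, 1%R]).
Proof.
move=> mA; rewrite /unif /uniform_prob integral_uniform_pdf.
rewrite (eq_integral (cst 1%E)); last first.
  move=> z; rewrite inE => -[_]; rewrite /= in_itv /= /uniform_pdf => ->.
  by rewrite subr0 invr1.
by rewrite integral_cst ?mul1e //; exact: measurableI.
Qed.

Lemma unif_read_preim n x y : unif (read_preim n x y) = (int_len n x y)%:E.
Proof.
rewrite unifE; last exact: measurable_read_preim.
have := int_of_path_bounds n x y; rewrite read_preimE /int_lo /int_len.
case: (int_of_path n x y) => [[prev lo] len] [lo0 [len0 l1]] /=.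
set J := (X in _ `|` X).
have mJ : measurable (J `&` `[0%R, 1%R]).
  apply: measurableI; last exact: measurable_itv.
  by apply: measurableI; [exact: measurable_out01 | exact: measurable_prop_set].
have sub : [set` `[lo, lo + len[%R] `<=` `[0%R, 1%R].
  move=> u; rewrite /= !in_itv /= => /andP[h1 h2].
  by rewrite (le_trans lo0 h1) /= ltW // (lt_le_trans h2 l1).
have dis : [set` `[lo, lo + len[%R] `&` (J `&` `[0%R, 1%R]) = set0.
  apply/seteqP; split=> u // [+ [[+ _] _]]; rewrite /out01 /= in_itv /= => /andP[h1 h2].
  by rewrite (le_trans lo0 h1) (lt_le_trans h2 l1).
have subJ : J `&` `[0%R, 1%R] `<=` [set 1%R].
  move=> u [[u01 _]]; rewrite /= in_itv /= => /andP[h1 h2].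
  apply/eqP; rewrite eq_le h2 /= leNgt; apply/negP => lt.
  by apply: u01; rewrite h1 lt.
have mI : measurable [set` `[lo, lo + len[%R] by exact: measurable_itv.
rewrite setIUl (setIidl sub) measureU //.
rewrite (@subset_measure0 _ _ _ lebesgue_measure _ _ mJ (measurable_set1 1%R) subJ
  (lebesgue_measure_set1 1%R)).
rewrite adde0; apply: eq_trans (lebesgue_measure_itv _) _; rewrite /= lte_fin.
case: (ltP lo (lo + len)) => h; first by rewrite -EFinB addrC addKr.
by have -> : len = 0 by apply/eqP; rewrite eq_le len0 andbT -(lerD2l lo) addr0.
Qed.

Lemma int_of_path_last n x y : (int_of_path n.+1 x y).1.1 = y n.
Proof. by rewrite /=; case: (int_of_path n x y) => [[? ?] ?]. Qed.

Lemma int_len1 x y : int_len 1 x y = r 0 x def (y 0%N).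
Proof. by rewrite /int_len /= mul1r. Qed.

Lemma int_lenS n x y : int_len n.+2 x y = int_len n.+1 x y * r n.+1 x (y n) (y n.+1).
Proof.
have := int_of_path_last n x y; rewrite /int_len.
change (int_of_path n.+2 x y) with (subint n.+1 x (y n.+1) (int_of_path n.+1 x y)).
by case: (int_of_path n.+1 x y) => [[? ?] ?] /= ->.
Qed.

Section Causal.
Hypothesis r_causal : forall n x x', agree_upto n.+1 x x' -> r n x = r n x'.

Lemma int_of_point_agree n x x' u :
  agree_upto n x x' -> int_of_point n x u = int_of_point n x' u.
Proof.
elim: n => [//|n IH] h /=; rewrite IH; last exact: agree_uptoW.
by rewrite /next_int /in_subint /subint /weight_before /partial_weight (r_causal h).
Qed.

Lemma int_of_path_agree n x x' y y' : agree_upto n x x' -> agree_upto n y y' ->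
  int_of_path n x y = int_of_path n x' y'.
Proof.
elim: n => [//|n IH] h h' /=; rewrite IH; try exact: agree_uptoW.
by rewrite /subint /weight_before /partial_weight (r_causal h) (h' n (ltnSn n)).
Qed.

Lemma read_preim_agree n x x' y : agree_upto n x x' -> read_preim n x y = read_preim n x' y.
Proof.
move=> h; apply/seteqP; split=> u /= H i ilt; rewrite -(H i ilt) /read_choice;
  by rewrite (@int_of_point_agree i.+1 x x') // => j jlt; apply: h; exact: leq_trans jlt ilt.
Qed.

Lemma int_len_agree n x x' y y' : agree_upto n x x' -> agree_upto n y y' ->
  int_len n x y = int_len n x' y'.
Proof. by move=> h h'; rewrite /int_len (int_of_path_agree h h'). Qed.
End Causal.

End NestedIntervals.

Lemma sum_eq_indicator (R : pzSemiRingType) (S : finType) (F : S -> R) c :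
  \sum_(a : S) (c == a)%:R * F a = F c.
Proof.
rewrite (bigD1 c) //= eqxx mul1r big1 ?addr0 // => a ac.
by rewrite eq_sym (negbTE ac) mul0r.
Qed.

Section BayesKernel.
Variables (R : realType) (S : finType) (def : S).
Variables (p : S -> S -> R) (m : S -> R) (mu : S -> S -> R).
Hypotheses (hp : stochastic p) (hfull : full_support m) (hinv : invariant_law p m)
  (hmu : inM' p m mu).

Lemma mu_ge0 a b : 0 <= mu a b.
Proof. by case: hmu => -[h _] _; exact: h. Qed.

Lemma mu_sum_row a : \sum_(b : S) mu a b = m a.
Proof. by case: hmu => -[_ [_ [h _]]] _; exact: h. Qed.

Lemma mu_sum_col b : \sum_(a : S) mu a b = m b.
Proof. by case: hmu => -[_ [_ [_ h]]] _; exact: h. Qed.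

Lemma mu_balance s t : \sum_(s' : S) mu_cond m mu s' t * p s' s
                      = \sum_(t' : S) mu_cond m mu s t' * p t t'.
Proof. by case: hmu => _; exact. Qed.


Lemma p_ge0 a b : 0 <= p a b.
Proof. by case: hp => h _; exact: h. Qed.

Lemma m_neq0 a : m a != 0.
Proof. by rewrite gt_eqF. Qed.

Lemma mu_cond_ge0 a b : 0 <= mu_cond m mu a b.
Proof. by rewrite divr_ge0 ?mu_ge0 // ltW. Qed.

Lemma mu_cond_sum t : \sum_a mu_cond m mu a t = 1.
Proof. by rewrite -mulr_suml mu_sum_col mulfV ?m_neq0. Qed.

Definition bayes_den (prev s : S) := \sum_(b : S) p prev b * mu_cond m mu s b.

(* Law of [t_{n+1}] given [t_n = prev] and [s_{n+1} = s]; when [bayes_den prev s = 0]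
   that event is null and any probability vector would do. *)
Definition bayes_step (s prev b : S) :=
  if bayes_den prev s == 0 then p prev b else p prev b * mu_cond m mu s b / bayes_den prev s.

Definition tkernel n (x : nat -> S) (prev b : S) :=
  if n is 0 then mu (x 0%N) b / m (x 0%N) else bayes_step (x n) prev b.

Lemma bayes_den_ge0 prev s : 0 <= bayes_den prev s.
Proof. by apply: sumr_ge0 => b _; rewrite mulr_ge0 ?p_ge0 ?mu_cond_ge0. Qed.

Lemma tkernel_ge0 n x prev b : 0 <= tkernel n x prev b.
Proof.
case: n => [|n] /=; first by rewrite divr_ge0 ?mu_ge0 // ltW.
rewrite /bayes_step; case: ifP => _; first exact: p_ge0.
by rewrite divr_ge0 ?bayes_den_ge0 // mulr_ge0 ?p_ge0 ?mu_cond_ge0.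
Qed.

Lemma tkernel_sum1 n x prev : \sum_(b : S) tkernel n x prev b = 1.
Proof.
case: n => [|n] /=; first by rewrite -mulr_suml mu_sum_row mulfV ?m_neq0.
rewrite /bayes_step; have [_|c0] := eqVneq (bayes_den prev (x n.+1)) 0; first by case: hp.
by rewrite -mulr_suml mulfV.
Qed.

Lemma tkernel_causal n x x' : agree_upto n.+1 x x' -> tkernel n x = tkernel n x'.
Proof. by move=> /(_ n (ltnSn n)); case: n => [|n] h; rewrite /tkernel h. Qed.

Definition path_prob n (y : nat -> S) := m (y 0%N) * \prod_(i < n) p (y i) (y i.+1).

(* The probability that [t_0, ..., t_n] equals [y] when the path of [s] is [x]. *)
Definition tlaw n x y := int_len def tkernel n.+1 x y.

(* The probability that [s_n = a] and [t_0, ..., t_n] equals [y]. *)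
Definition joint_law n a y :=
  sum_prefix def n.+1 (fun x => path_prob n x * (x n == a)%:R * tlaw n x y).

Lemma path_probS n y : path_prob n.+1 y = path_prob n y * p (y n) (y n.+1).
Proof. by rewrite /path_prob big_ord_recr /= mulrA. Qed.

Lemma path_prob_upd n x b : path_prob n (upd x n.+1 b) = path_prob n x.
Proof.
rewrite /path_prob upd_neq //; congr (_ * _); apply: eq_bigr => i _.
by rewrite !upd_neq // neq_ltn ?ltnS ?ltn_ord // ltnW.
Qed.

Lemma tlaw_upd n x b y : tlaw n (upd x n.+1 b) y = tlaw n x y.
Proof.
apply: int_len_agree => // [|i ilt]; first exact: tkernel_causal.
by rewrite upd_neq // neq_ltn ilt.
Qed.

Lemma tlawS n x y : tlaw n.+1 x y = tlaw n x y * bayes_step (x n.+1) (y n) (y n.+1).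
Proof. by rewrite /tlaw int_lenS. Qed.

Lemma sum_joint_law_step n a x y :
  \sum_(b : S) path_prob n.+1 (upd x n.+1 b) * (upd x n.+1 b n.+1 == a)%:R
               * tlaw n.+1 (upd x n.+1 b) y =
  \sum_(c : S) path_prob n x * (x n == c)%:R * tlaw n x y
               * (p c a * bayes_step a (y n) (y n.+1)).
Proof.
have e b : upd x n.+1 b n = x n by rewrite upd_neq // (ltn_eqF (ltnSn n)).
under eq_bigr => b _ do rewrite path_probS path_prob_upd tlawS tlaw_upd !upd_eq e.
rewrite (bigD1 a) //= eqxx big1 ?addr0 => [|b /negbTE->]; last by rewrite !mulr0 !mul0r.
rewrite (eq_bigr (fun c => (x n == c)%:R *
  (path_prob n x * tlaw n x y * (p c a * bayes_step a (y n) (y n.+1))))) => [|c _];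
  last by ring.
by rewrite sum_eq_indicator mulr1; ring.
Qed.

Lemma bayes_den_balance y a : \sum_(c : S) mu_cond m mu c y * p c a = bayes_den y a.
Proof. by rewrite mu_balance; apply: eq_bigr => t _; exact: mulrC. Qed.

Lemma bayes_step_update n a y :
  path_prob n y * bayes_step a (y n) (y n.+1) * bayes_den (y n) a =
  mu_cond m mu a (y n.+1) * path_prob n.+1 y.
Proof.
rewrite path_probS /bayes_step; case: ifPn => [/eqP c0|c0]; last by field.
have h : p (y n) (y n.+1) * mu_cond m mu a (y n.+1) = 0.
  move/eqP: c0; rewrite psumr_eq0 => [|b _]; last by rewrite mulr_ge0 ?p_ge0 ?mu_cond_ge0.
  by move/allP/(_ (y n.+1)); rewrite mem_index_enum => /(_ isT) /eqP.
by rewrite c0 mulr0 mulrCA (mulrC (mu_cond _ _ _ _)) h mulr0.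
Qed.

Lemma joint_lawE n a y : joint_law n a y = mu_cond m mu a (y n) * path_prob n y.
Proof.
elim: n a => [|n IH] a.
  rewrite /joint_law /= /tlaw (bigD1 a) //= big1 => [|b /negbTE ba]; last first.
    by rewrite upd_eq ba mulr0 mul0r.
  rewrite int_len1 /path_prob !big_ord0 /tkernel !upd_eq eqxx addr0 /mu_cond.
  by rewrite !mulr1; field; rewrite !m_neq0.
rewrite /joint_law sum_prefixS (eq_sum_prefix _ _ (sum_joint_law_step n a ^~ y)).
rewrite sum_prefix_sum.
under eq_bigr => c _ do rewrite (eq_sum_prefix _ _ (fun x => mulrC _ _))
  mulr_sum_prefixr -/(joint_law n c y) IH.
rewrite -bayes_step_update -bayes_den_balance mulr_sumr.
by apply: eq_bigr => c _; ring.
Qed.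

Lemma sum_path_tlaw n y :
  sum_prefix def n.+1 (fun x => path_prob n x * tlaw n x y) = path_prob n y.
Proof.
have E x : path_prob n x * tlaw n x y =
           \sum_(a : S) path_prob n x * (x n == a)%:R * tlaw n x y.
  by rewrite -[LHS](sum_eq_indicator (fun _ => path_prob n x * tlaw n x y) (x n));
     apply: eq_bigr => a _; ring.
rewrite (eq_sum_prefix _ _ E) sum_prefix_sum.
under eq_bigr => a _ do rewrite -/(joint_law n a y) joint_lawE.
by rewrite -mulr_suml mu_cond_sum mul1r.
Qed.

Lemma sum_path_prob_last n b : sum_prefix def n (fun x => path_prob n (upd x n b)) = m b.
Proof.
elim: n b => [|n IH] b; first by rewrite /= /path_prob big_ord0 mulr1 upd_eq.
rewrite sum_prefixS.
have E x : \sum_(c : S) path_prob n.+1 (upd (upd x n c) n.+1 b) =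
           \sum_(c : S) path_prob n (upd x n c) * p c b.
  apply: eq_bigr => c _; rewrite path_probS path_prob_upd !upd_eq.
  by rewrite upd_neq ?(ltn_eqF (ltnSn n)) // upd_eq.
rewrite (eq_sum_prefix _ _ E) sum_prefix_sum -(hinv b).
under eq_bigr => c _ do rewrite (eq_sum_prefix _ _ (fun x => mulrC _ _)) mulr_sum_prefixr IH.
by apply: eq_bigr => c _; exact: mulrC.
Qed.

Section Construction.
Variables (d0 : measure_display) (Omega0 : measurableType d0) (P0 : probability Omega0 R).
Variable s0 : nat -> Omega0 -> S.
Hypotheses (hs0 : rv_process s0) (hmc : markov_chain P0 m p s0).

Local Notation PU := (P0 \x @unif R)%E.

Definition spath (w : Omega0) : nat -> S := fun i => s0 i w.
Definition sproc n (w : Omega0 * R) := s0 n w.1.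
Definition tproc n (w : Omega0 * R) := read_choice def tkernel n (spath w.1) w.2.

Let tset n x y := read_preim def tkernel n.+1 x y.

Lemma measurable_tset n x y : measurable (tset n x y).
Proof. exact: measurable_read_preim tkernel_ge0 tkernel_sum1 _ _ _. Qed.

Lemma unif_tset n x y : unif (tset n x y) = (tlaw n x y)%:E.
Proof. exact: unif_read_preim tkernel_ge0 tkernel_sum1 _ _ _. Qed.

Lemma tset_agree n x x' y : agree_upto n.+1 x x' -> tset n x y = tset n x' y.
Proof. exact: read_preim_agree tkernel_causal _ _ _ _. Qed.

Lemma fine_path_prob N x : fine (P0 (cyl s0 0 N.+1 x)) = path_prob N x.
Proof. by rewrite hmc. Qed.

Lemma measure_fst (A : set Omega0) : measurable A -> PU (fst @^-1` A) = P0 A.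
Proof.
move=> mA; have -> : fst @^-1` A = A `*` [set: R].
  by apply/seteqP; split=> w /=; [move=> h; split|case].
by rewrite product_measure1E // [X in (_ * X)%E]probability_setT mule1.
Qed.

Lemma fine_prod_section (A : set Omega0) N (G : (nat -> S) -> set R) : measurable A ->
  (forall x x', agree_upto N x x' -> G x = G x') -> (forall x, measurable (G x)) ->
  measurable [set w : Omega0 * R | A w.1 /\ G (spath w.1) w.2] /\
  fine (PU [set w | A w.1 /\ G (spath w.1) w.2]) =
    sum_prefix def N (fun x => fine (P0 (A `&` cyl s0 0 N x)) * fine (unif (G x))).
Proof.
move=> mA Gdep mG; pose F x := (A `&` cyl s0 0 N x) `*` G x.
have mAc x : measurable (A `&` cyl s0 0 N x).
  by apply: measurableI => //; exact: measurable_cyl.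
have [] := @fine_measure_bigcup_prefix R S def _ _ PU N F.
- by move=> x x' h; rewrite /F (cyl_agree _ h) (Gdep _ _ h).
- move=> x x' i iN xx; apply/seteqP; split=> w // [[[_ h1] _] [[_ h2] _]].
  by move: xx; rewrite -(h1 i) ?(h2 i) ?eqxx.
- by move=> x; exact: measurableX (mAc x) (mG x).
have -> : \bigcup_x F x = [set w : Omega0 * R | A w.1 /\ G (spath w.1) w.2].
  apply/seteqP; split=> w /=.
    move=> [x _ [[Aw cw] Gw]]; split => //.
    by rewrite (Gdep (spath w.1) x) // => i iN; apply: cw.
  by move=> [Aw Gw]; exists (spath w.1) => //; split.
move=> mU ->; split => //; apply: eq_sum_prefix => x.
transitivity (fine (P0 (A `&` cyl s0 0 N x) * @unif R (G x))%E).
  by congr (fine _); apply: product_measure1E; [exact: mAc | exact: mG].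
by rewrite fineM // fin_num_measure //; exact: mG.
Qed.

Lemma fine_prod_tset (A : set Omega0) n y : measurable A ->
  measurable [set w : Omega0 * R | A w.1 /\ tset n (spath w.1) y w.2] /\
  fine (PU [set w | A w.1 /\ tset n (spath w.1) y w.2]) =
  sum_prefix def n.+1 (fun x => fine (P0 (A `&` cyl s0 0 n.+1 x)) * tlaw n x y).
Proof.
move=> mA; have [mE ->] := fine_prod_section mA (fun x x' => @tset_agree n x x' y)
  (fun x => measurable_tset n x y).
by split=> //; apply: eq_sum_prefix => x; rewrite unif_tset.
Qed.

Lemma fine_prod_tset_last (A : set Omega0) n a y : measurable A ->
  let E := [set w : Omega0 * R | A w.1 /\
     (if spath w.1 n == a then tset n (spath w.1) y else set0) w.2] in
  measurable E /\ fine (PU E) =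
  sum_prefix def n.+1
    (fun x => fine (P0 (A `&` cyl s0 0 n.+1 x)) * ((x n == a)%:R * tlaw n x y)).
Proof.
move=> mA; cbv zeta.
have [] := @fine_prod_section A n.+1 (fun x => if x n == a then tset n x y else set0) mA.
- by move=> x x' h; rewrite (h n (ltnSn n)) (tset_agree _ h).
- by move=> x; case: ifP => _ //; exact: measurable_tset.
move=> mE ->; split=> //; apply: eq_sum_prefix => x.
case: ifP => _; first by rewrite unif_tset mul1r.
by rewrite (_ : @unif R set0 = 0%E) ?mul0r ?mulr0 //; exact: measure0.
Qed.

Lemma tproc_cylE n y :
  cyl tproc 0 n.+1 y = [set w : Omega0 * R | setT w.1 /\ tset n (spath w.1) y w.2].
Proof.
apply/seteqP; split=> w /=; first by move=> h; split=> // i ilt; apply: h; rewrite add0n.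
by move=> [_ h] i /andP[_]; rewrite add0n => ilt; apply: h.
Qed.

Lemma measurable_tproc_cyl n y : measurable (cyl tproc 0 n.+1 y).
Proof. by rewrite tproc_cylE; case: (fine_prod_tset n y measurableT). Qed.

Lemma prob_tproc_cyl n y : PU (cyl tproc 0 n.+1 y) = (path_prob n y)%:E.
Proof.
rewrite (measure_fineK (PU : probability _ R) (measurable_tproc_cyl n y)) tproc_cylE.
case: (fine_prod_tset n y measurableT) => _ ->; rewrite -(sum_path_tlaw n y).
by congr (_%:E); apply: eq_sum_prefix => x; rewrite setTI fine_path_prob.
Qed.

Lemma sproc_tproc_cylE n a y : evt sproc n a `&` cyl tproc 0 n.+1 y =
  [set w : Omega0 * R | setT w.1 /\
     (if spath w.1 n == a then tset n (spath w.1) y else set0) w.2].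
Proof.
apply/seteqP; split=> w /=.
  move=> [e h]; rewrite /evt /sproc /= in e.
  by rewrite /spath e eqxx; split=> // i ilt; apply: h; rewrite add0n.
by move=> [_]; rewrite /spath; case: eqP => [e h|_ []]; split=> // i /andP[_] /h.
Qed.

Lemma measurable_sproc_tproc_cyl n a y : measurable (evt sproc n a `&` cyl tproc 0 n.+1 y).
Proof. by rewrite sproc_tproc_cylE; case: (fine_prod_tset_last n a y measurableT). Qed.

Lemma prob_sproc_tproc_cyl n a y :
  PU (evt sproc n a `&` cyl tproc 0 n.+1 y) = (joint_law n a y)%:E.
Proof.
rewrite (measure_fineK (PU : probability _ R) (measurable_sproc_tproc_cyl n a y)).
rewrite sproc_tproc_cylE.
case: (fine_prod_tset_last n a y measurableT) => _ ->.
by congr (_%:E); apply: eq_sum_prefix => x; rewrite setTI fine_path_prob mulrA.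
Qed.

Lemma measurable_sproc n a : measurable (evt sproc n a).
Proof.
have mfst : measurable_fun setT (@fst Omega0 R) by exact: measurable_fst.
by have := mfst measurableT _ (hs0 n a); rewrite setTI.
Qed.

Lemma fine_prob_tproc_last (B : set (Omega0 * R)) n b : measurable B ->
  (forall y, measurable (B `&` cyl tproc 0 n.+1 (upd y n b))) ->
  measurable (B `&` evt tproc n b) /\
  fine (PU (B `&` evt tproc n b)) =
  sum_prefix def n (fun y => fine (PU (B `&` cyl tproc 0 n.+1 (upd y n b)))).
Proof.
move=> mB mF; have -> : B `&` evt tproc n b = \bigcup_y (B `&` cyl tproc 0 n.+1 (upd y n b)).
  apply/seteqP; split=> w /=.
    move=> [Bw e]; exists (fun i => tproc i w) => //; split=> // i /andP[_].
    rewrite add0n ltnS leq_eqVlt => /orP[/eqP->|ilt]; first by rewrite upd_eq.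
    by rewrite upd_neq ?(ltn_eqF ilt).
  move=> [y _ [Bw h]]; split=> //; rewrite /evt /= -(upd_eq y n b); apply: h.
  by rewrite leq0n add0n ltnS leqnn.
apply: (@fine_measure_bigcup_prefix R S def _ _ (PU : probability _ R) n)
  => // [y y' h|y y' i ilt yy].
  congr (_ `&` _); apply: cyl_agree => i; rewrite ltnS leq_eqVlt => /orP[/eqP->|ilt].
    by rewrite !upd_eq.
  by rewrite !upd_neq ?(ltn_eqF ilt) // h.
apply/seteqP; split=> w // [[_ h1] [_ h2]].
have hi : (0 <= i < 0 + n.+1)%N by rewrite leq0n add0n ltnS ltnW.
move: (h1 i hi) (h2 i hi); rewrite !upd_neq ?(ltn_eqF ilt) // => -> e.
by move: yy; rewrite e eqxx.
Qed.

Lemma rv_tproc : rv_process tproc.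
Proof.
move=> n b; rewrite -(setTI (evt tproc n b)).
case: (@fine_prob_tproc_last setT n b measurableT) => // y.
by rewrite setTI; exact: measurable_tproc_cyl.
Qed.

Lemma law_tproc n x : PU (cyl tproc 0 n x) = PU (cyl sproc 0 n x).
Proof.
case: n => [|n]; first by rewrite !cyl0.
rewrite prob_tproc_cyl -hmc -measure_fst //; exact: measurable_cyl.
Qed.

Lemma law_sproc_tproc n a b : PU (evt sproc n a `&` evt tproc n b) = (mu a b)%:E.
Proof.
have [mE fE] := @fine_prob_tproc_last (evt sproc n a) n b (measurable_sproc n a)
  (fun y => measurable_sproc_tproc_cyl n a _).
rewrite measure_fineK // fE; congr (_%:E).
under eq_sum_prefix do rewrite prob_sproc_tproc_cyl /= joint_lawE upd_eq.
by rewrite mulr_sum_prefixr sum_path_prob_last /mu_cond mulfVK ?m_neq0.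
Qed.

Lemma posterior_sproc n a y : PU (evt sproc n a `&` cyl tproc 0 n.+1 y)
  = ((mu_cond m mu a (y n))%:E * PU (cyl tproc 0 n.+1 y))%E.
Proof. by rewrite prob_sproc_tproc_cyl joint_lawE prob_tproc_cyl EFinM. Qed.

Definition splice n (x z : nat -> S) j := if (j < n.+1)%N then x j else z j.

(* The probability that the chain moves from [c] at time [n] through
   [z (n + 1), ..., z (n + k)]. *)
Definition cont_prob n k z (c : S) :=
  \prod_(i < k) p (splice n (fun=> c) z (n + i)) (splice n (fun=> c) z (n + i).+1).

Lemma cyl_splice n k z x :
  cyl s0 n.+1 k z `&` cyl s0 0 n.+1 x = cyl s0 0 (n + k).+1 (splice n x z).
Proof.
apply/seteqP; split=> w /=.
  move=> [h1 h2] i /andP[_]; rewrite add0n => ilt; rewrite /splice.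
  case: ltnP => hi; first by apply: h2; rewrite leq0n add0n.
  by apply: h1; rewrite hi /= addSn.
move=> h; split=> i /andP[hi1 hi2].
  have hn : (i < n.+1)%N = false by rewrite ltnNge hi1.
  have := h i; rewrite /splice hn; apply.
  by rewrite leq0n add0n -addSn.
have := h i; rewrite /splice; rewrite add0n in hi2; rewrite hi2; apply.
by rewrite leq0n add0n ltnS -ltnS (leq_trans hi2) // ltnS leq_addr.
Qed.

Lemma path_prob_splice n k x z :
  path_prob (n + k) (splice n x z) = path_prob n x * cont_prob n k z (x n).
Proof.
rewrite /path_prob big_split_ord /= -mulrA; congr (_ * (_ * _)).
  apply: eq_bigr => i _ /=; rewrite /splice ltnS ltnW ?ltn_ord //.
  by rewrite ltnS ltn_ord.
apply: eq_bigr => i _ /=; rewrite /splice ltnS ltnNge leq_addr /=.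
case: (leqP (n + i) n) => // h.
by have -> : (n + i)%N = n by apply/eqP; rewrite eqn_leq leq_addr andbT -ltnS.
Qed.

Lemma fine_prob_future n k z a : measurable (evt s0 n a `&` cyl s0 n.+1 k z) /\
  fine (P0 (evt s0 n a `&` cyl s0 n.+1 k z)) = m a * cont_prob n k z a.
Proof.
have -> : evt s0 n a `&` cyl s0 n.+1 k z =
    \bigcup_x cyl s0 0 (n + k).+1 (splice n (upd x n a) z).
  apply/seteqP; split=> w /=.
    move=> [e h]; exists (spath w) => // i /andP[_]; rewrite add0n => ilt; rewrite /splice.
    case: ltnP => hi; last by apply: h; rewrite hi /= addSn.
    by rewrite /upd /spath; case: eqP => [->|].
  move=> [x _ h]; split.
    have := h n; rewrite /splice ltnSn upd_eq; apply.
    by rewrite leq0n add0n ltnS leq_addr.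
  move=> i /andP[hi1 hi2]; have hn : (i < n.+1)%N = false by rewrite ltnNge hi1.
  have := h i; rewrite /splice hn; apply.
  by rewrite leq0n add0n -addSn.
have [] := @fine_measure_bigcup_prefix R S def _ _ P0 n
  (fun x => cyl s0 0 (n + k).+1 (splice n (upd x n a) z)).
- move=> x x' h; congr (cyl _ _ _ _); apply: funext => j; rewrite /splice.
  case: ifP => // jn; rewrite /upd; case: eqP => // /eqP jn'.
  by apply: h; rewrite ltn_neqAle jn' -ltnS jn.
- move=> x x' i ilt xx; apply/seteqP; split=> w // [h1 h2].
  have hi : (0 <= i < 0 + (n + k).+1)%N.
    by rewrite leq0n add0n ltnS (leq_trans (ltnW ilt)) // leq_addr.
  move: (h1 i hi) (h2 i hi).
  rewrite /splice ltnS (ltnW ilt) !upd_neq ?(ltn_eqF ilt) // => -> e.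
  by move: xx; rewrite e eqxx.
- by move=> x; exact: measurable_cyl.
move=> mU ->; split=> //.
under eq_sum_prefix do rewrite fine_path_prob path_prob_splice upd_eq.
by rewrite (eq_sum_prefix _ _ (fun x => mulrC _ _)) mulr_sum_prefixr sum_path_prob_last mulrC.
Qed.

Lemma tproc_sproc_futureE n k a y z :
  cyl tproc 0 n.+1 y `&` evt sproc n a `&` cyl sproc n.+1 k z =
  [set w : Omega0 * R | cyl s0 n.+1 k z w.1 /\
     (if spath w.1 n == a then tset n (spath w.1) y else set0) w.2].
Proof.
apply/seteqP; split=> w /=.
  by move=> [[h e] c]; rewrite /evt /sproc /= in e; rewrite /spath e eqxx.
by move=> [c]; rewrite /spath; case: eqP => [e h|_ []].
Qed.

Lemma cond_indep n a y k z :
  (PU (cyl tproc 0 n.+1 y `&` evt sproc n a `&` cyl sproc n.+1 k z) * PU (evt sproc n a)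
  = PU (cyl tproc 0 n.+1 y `&` evt sproc n a) * PU (evt sproc n a `&` cyl sproc n.+1 k z))%E.
Proof.
have [mA fA] := fine_prob_future n k z a.
have [mA0 fA0] := fine_prob_future n 0 z a.
have -> : PU (cyl tproc 0 n.+1 y `&` evt sproc n a `&` cyl sproc n.+1 k z) =
    (cont_prob n k z a * joint_law n a y)%:E.
  have [mE fE] := fine_prod_tset_last n a y (measurable_cyl n.+1 k z hs0).
  rewrite tproc_sproc_futureE (measure_fineK (PU : probability _ R) mE) fE.
  rewrite /joint_law -mulr_sum_prefixr; congr (_%:E); apply: eq_sum_prefix => x.
  rewrite cyl_splice fine_path_prob path_prob_splice.
  by case: eqP => [->|_]; rewrite ?mulr0 ?mul0r //; ring.
have -> : PU (evt sproc n a) = (m a)%:E.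
  rewrite -[evt sproc n a]/(fst @^-1` evt s0 n a) -[evt s0 n a]setIT -(cyl0 s0 n.+1 z).
  by rewrite measure_fst // (measure_fineK P0 mA0) fA0 /cont_prob big_ord0 mulr1.
have -> : PU (evt sproc n a `&` cyl sproc n.+1 k z) = (m a * cont_prob n k z a)%:E.
  rewrite -[X in PU X]/(fst @^-1` (evt s0 n a `&` cyl s0 n.+1 k z)) measure_fst //.
  by rewrite (measure_fineK P0 mA) fA.
by rewrite setIC prob_sproc_tproc_cyl -!EFinM; congr (_%:E); ring.
Qed.
End Construction.
End BayesKernel.

Local Open Scope ereal_scope.


Theorem lemma7 (R : realType) (S : finType) (p : S -> S -> R) (m : S -> R)
  (hp : stochastic p) (hirr : irreducible p) (hap : aperiodic p)
  (hm : prob_vector m) (hinv : invariant_law p m) (hfull : full_support m)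
  (d0 : measure_display) (Omega0 : measurableType d0) (P0 : probability Omega0 R)
  (s0 : nat -> Omega0 -> S) (hs0 : rv_process s0) (hmc : markov_chain P0 m p s0)
  (mu : S -> S -> R) (hmu : inM' p m mu) :
  exists (d : measure_display) (Omega : measurableType d) (P : probability Omega R)
         (pi : Omega -> Omega0) (t : nat -> Omega -> S),
    let s := fun n w => s0 n (pi w) in
    measurable_fun setT pi /\
    (forall A, measurable A -> P (pi @^-1` A) = P0 A) /\
    rv_process t /\
    (forall n x, P (cyl t 0 n x) = P (cyl s 0 n x)) /\
    (forall n a b, P (evt s n a `&` evt t n b) = (mu a b)%:E) /\
    (forall n a y, P (evt s n a `&` cyl t 0 n.+1 y)
                   = (mu_cond m mu a (y n))%:E * P (cyl t 0 n.+1 y)) /\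
    (forall n a y k z,
        P (cyl t 0 n.+1 y `&` evt s n a `&` cyl s n.+1 k z) * P (evt s n a)
        = P (cyl t 0 n.+1 y `&` evt s n a) * P (evt s n a `&` cyl s n.+1 k z)).
Proof.
have [def _] : exists a : S, true.
  case: (pickP (fun _ : S => true)) => [a _|none]; first by exists a.
  move: (proj2 hm); rewrite big1 => [/eqP|a _]; last by have := none a.
  by rewrite eq_sym oner_eq0.
exists _, _, (P0 \x @unif R)%E, fst, (tproc def p m mu s0).
move=> s; split; first exact: measurable_fst.
split; first exact: measure_fst.
split; first exact: rv_tproc.
split; first exact: law_tproc.
split; first exact: law_sproc_tproc.
split; first exact: posterior_sproc.
exact: cond_indep.
Qed.
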